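(* There exist constants $c>0$ and $\alpha_0\in(0,\frac12]$ such that for every $\alpha\in(0,\alpha_0]$, every Any-Fit algorithm $A$ for stochastic bin packing of scaled Bernoulli items with overflow bound $\alpha$, and every positive integer $N$, there is an instance of independent items $X_i\sim\operatorname{Ber}(p_i,s_i)$ with $p_i\in(0,1]$, $s_i\in(0,1]$, whose optimal viable packing uses $OPT\ge N$ bins and on which $A$ uses at least $c\,\alpha^{-1/2}\cdot OPT$ bins. In other words, every Any-Fit algorithm has approximation ratio $\Omega(\alpha^{-1/2})$.
   Context: $X\sim\operatorname{Ber}(p,s)$ means $X=s$ with probability $p$ and $0$ otherwise. Bins have capacity $1$; a set of independent items in a bin is viable if its sum $B$ satisfies $\mathbb{P}(B>1)\le\alpha$, and a packing is viable if all bins are; $OPT$ is the minimum number of bins of a viable packing. An Any-Fit algorithm processes items online in the given order, always keeps every bin viable, and opens a new bin for the current item only if adding it to any already opened bin would make that bin non-viable. *)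

From Stdlib Require Import Reals List Arith.
Import ListNotations.
Open Scope R_scope.

(* A scaled Bernoulli item X ~ Ber(p, s): X = s with probability p, else 0. *)
Record item := mkItem { bprob : R; bsize : R }.

Definition valid_item (x : item) : Prop :=
  0 < bprob x <= 1 /\ 0 < bsize x <= 1.

(* All outcome vectors (which items are "on") of length n. *)
Fixpoint outcomes (n : nat) : list (list bool) :=
  match n with
  | O => [[]]
  | S k => map (cons true) (outcomes k) ++ map (cons false) (outcomes k)
  end.

Fixpoint outcome_prob (l : list item) (o : list bool) : R :=
  match l, o with
  | x :: l', b :: o' => (if b then bprob x else 1 - bprob x) * outcome_prob l' o'
  | _, _ => 1
  end.

Fixpoint outcome_sum (l : list item) (o : list bool) : R :=
  match l, o with
  | x :: l', b :: o' => (if b then bsize x else 0) + outcome_sum l' o'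
  | _, _ => 0
  end.

Definition overflow_prob (l : list item) : R :=
  fold_right Rplus 0
    (map (fun o => if Rlt_dec 1 (outcome_sum l o) then outcome_prob l o else 0)
         (outcomes (length l))).

Definition viable (alpha : R) (l : list item) : Prop := overflow_prob l <= alpha.

(* Offline packings: assignment f of item indices to bins 0..m-1. *)
Definition bin_of (items : list item) (f : nat -> nat) (j : nat) : list item :=
  map fst (filter (fun xi => Nat.eqb (f (snd xi)) j)
                  (combine items (seq 0 (length items)))).

Definition viable_packing (alpha : R) (items : list item) (m : nat) (f : nat -> nat) : Prop :=
  (forall i, (i < length items)%nat -> (f i < m)%nat) /\
  (forall j, (j < m)%nat -> viable alpha (bin_of items f j)).

Definition is_OPT (alpha : R) (items : list item) (opt : nat) : Prop :=
  (exists f, viable_packing alpha items opt f) /\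
  (forall m f, viable_packing alpha items m f -> (opt <= m)%nat).

(* An online algorithm: given the previously processed items (in order),
   the current bins (each a list of items) and the current item, returns
   the index of the bin to put the item into; an index >= number of bins
   means "open a new bin". *)
Definition algorithm := list item -> list (list item) -> item -> nat.

Definition any_fit (alpha : R) (A : algorithm) : Prop :=
  forall past bins x,
    Forall (viable alpha) bins ->
    ((A past bins x < length bins)%nat ->
        viable alpha (nth (A past bins x) bins [] ++ [x])) /\
    ((length bins <= A past bins x)%nat ->
        forall b, In b bins -> ~ viable alpha (b ++ [x])).

Fixpoint add_to (k : nat) (bins : list (list item)) (x : item) : list (list item) :=
  match bins, k with
  | b :: bs, O => (b ++ [x]) :: bs
  | b :: bs, S k' => b :: add_to k' bs x
  | [], _ => []
  end.

Fixpoint run_aux (A : algorithm) (past : list item) (bins : list (list item))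
    (items : list item) : list (list item) :=
  match items with
  | [] => bins
  | x :: r =>
      let k := A past bins x in
      let bins' := if Nat.ltb k (length bins) then add_to k bins x
                   else bins ++ [[x]] in
      run_aux A (past ++ [x]) bins' r
  end.

Definition bins_used (A : algorithm) (items : list item) : nat :=
  length (run_aux A [] [] items).

(* Fix k ~ 1 / (4 sqrt alpha) and consider the sequence of N*k pairs (a, b) with
   a ~ Ber(1/2, 1/k) ("small") and b ~ Ber(2 alpha, 1) ("rare"), followed by N
   certain unit items u ~ Ber(1, 1).
   - Online: a bin [a; b] overflows with probability exactly alpha, so it is
     viable but accepts neither a nor b; hence Any-Fit puts every pair into a
     fresh bin and uses at least N*k bins.
   - Offline: k copies of a never overflow (total size 1), k copies of b
     overflow only if two of them are present, with probability at most
     (2 alpha k)^2 <= alpha, and every u gets its own bin; so OPT <= 3 N.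
   - Lower bound: a viable bin (alpha < 1) holds certain mass at most 1, so
     OPT is at least the total certain mass N.
   The ratio is thus at least k / 3 >= 1 / (12 sqrt alpha). *)

From Stdlib Require Import Reals List Arith Lia Lra Wf_nat ZArith Classical.
Import ListNotations.
Open Scope R_scope.

Definition sumR (l : list R) : R := fold_right Rplus 0 l.

Lemma sumR_app l1 l2 : sumR (l1 ++ l2) = sumR l1 + sumR l2.
Proof. unfold sumR; induction l1 as [|a l1 IH]; cbn; [ring|]. rewrite IH; ring. Qed.

Lemma sumR_scale {A} (c : R) (f : A -> R) l :
  sumR (map (fun a => c * f a) l) = c * sumR (map f l).
Proof. unfold sumR; induction l as [|a l IH]; cbn; [ring|]. rewrite IH; ring. Qed.

Lemma sumR_zero {A} (f : A -> R) l :
  (forall a, In a l -> f a = 0) -> sumR (map f l) = 0.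
Proof.
  unfold sumR; induction l as [|a l IH]; intro H; cbn; [reflexivity|].
  rewrite H, IH; [ring | intros b Hb; apply H; cbn; auto | cbn; auto].
Qed.

Lemma sumR_le {A} (f g : A -> R) l :
  (forall a, In a l -> f a <= g a) -> sumR (map f l) <= sumR (map g l).
Proof.
  unfold sumR; induction l as [|a l IH]; intro H; cbn; [lra|].
  specialize (IH (fun b Hb => H b (or_intror Hb))).
  specialize (H a (or_introl eq_refl)). lra.
Qed.

Lemma sumR_const_one m : sumR (map (fun _ : nat => 1) (seq 0 m)) = INR m.
Proof.
  induction m as [|m IH]; [reflexivity|].
  rewrite seq_S, map_app, sumR_app, IH, S_INR. cbn. ring.
Qed.

Lemma sumR_indicator (c m : nat) (v : R) :
  (c < m)%nat -> sumR (map (fun j => if Nat.eqb c j then v else 0) (seq 0 m)) = v.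
Proof.
  induction m as [|m IH]; intro Hc; [lia|].
  rewrite seq_S, map_app, sumR_app. cbn.
  destruct (Nat.eqb_spec c m) as [->|Hne].
  - rewrite sumR_zero; [ring|]. intros j Hj. apply in_seq in Hj.
    destruct (Nat.eqb_spec m j); [lia | reflexivity].
  - rewrite IH by lia. ring.
Qed.

Lemma sumR_plus {A} (f g : A -> R) l :
  sumR (map (fun a => f a + g a) l) = sumR (map f l) + sumR (map g l).
Proof. unfold sumR; induction l as [|a l IH]; cbn; [ring|]. rewrite IH; ring. Qed.

Definition tail_prob (l : list item) (t : R) : R :=
  sumR (map (fun o => if Rlt_dec t (outcome_sum l o) then outcome_prob l o else 0)
            (outcomes (length l))).

Lemma overflow_tail_prob l : overflow_prob l = tail_prob l 1.
Proof. reflexivity. Qed.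

Lemma tail_prob_nil t : tail_prob [] t = if Rlt_dec t 0 then 1 else 0.
Proof. unfold tail_prob, sumR; cbn. destruct (Rlt_dec t 0); ring. Qed.

(* Conditioning on the first item: the basic recursion for tail probabilities. *)
Lemma tail_prob_cons x l t :
  tail_prob (x :: l) t = bprob x * tail_prob l (t - bsize x) + (1 - bprob x) * tail_prob l t.
Proof.
  unfold tail_prob. cbn [length outcomes].
  rewrite map_app, sumR_app, !map_map, <- !sumR_scale.
  f_equal; f_equal; apply map_ext; intro o; cbn [outcome_sum outcome_prob].
  - destruct (Rlt_dec t (bsize x + outcome_sum l o));
      destruct (Rlt_dec (t - bsize x) (outcome_sum l o)); try lra; ring.
  - destruct (Rlt_dec t (0 + outcome_sum l o));
      destruct (Rlt_dec t (outcome_sum l o)); try lra; ring.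
Qed.

(* The items for which the recursion yields probabilities: p in [0, 1], s >= 0. *)
Definition sound (x : item) : Prop := 0 <= bprob x <= 1 /\ 0 <= bsize x.

Lemma valid_sound x : valid_item x -> sound x.
Proof. unfold valid_item, sound; lra. Qed.

Lemma sound_repeat x n : sound x -> Forall sound (repeat x n).
Proof. intro Hx. apply Forall_forall. intros y Hy. apply repeat_spec in Hy. congruence. Qed.

Lemma tail_prob_nonneg l t : Forall sound l -> 0 <= tail_prob l t.
Proof.
  intro H; revert t; induction H as [|x l [Hp Hs] _ IH]; intro t.
  - rewrite tail_prob_nil. destruct Rlt_dec; lra.
  - rewrite tail_prob_cons. pose proof (IH t). pose proof (IH (t - bsize x)). nra.
Qed.

Lemma tail_prob_negative l t : Forall sound l -> t < 0 -> tail_prob l t = 1.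
Proof.
  intro H; revert t; induction H as [|x l [Hp Hs] _ IH]; intros t Ht.
  - rewrite tail_prob_nil. destruct Rlt_dec; lra.
  - rewrite tail_prob_cons, !IH by lra. ring.
Qed.

Fixpoint total_size (l : list item) : R :=
  match l with [] => 0 | x :: l => bsize x + total_size l end.

Lemma tail_prob_beyond_total l t :
  Forall sound l -> total_size l <= t -> tail_prob l t = 0.
Proof.
  intro H; revert t; induction H as [|x l [Hp Hs] _ IH]; intros t Ht; cbn in Ht.
  - rewrite tail_prob_nil. destruct Rlt_dec; lra.
  - rewrite tail_prob_cons, !IH by lra. ring.
Qed.

Fixpoint certain_mass (l : list item) : R :=
  match l with
  | [] => 0
  | x :: l => (if Req_EM_T (bprob x) 1 then bsize x else 0) + certain_mass l
  end.

Lemma certain_mass_app l1 l2 : certain_mass (l1 ++ l2) = certain_mass l1 + certain_mass l2.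
Proof. induction l1 as [|x l1 IH]; cbn; [ring|]. rewrite IH; ring. Qed.

Lemma tail_prob_below_certain l t :
  Forall sound l -> t < certain_mass l -> tail_prob l t = 1.
Proof.
  intro H; revert t; induction H as [|x l [Hp Hs] _ IH]; intros t Ht; cbn in Ht.
  - rewrite tail_prob_nil. destruct Rlt_dec; lra.
  - rewrite tail_prob_cons. destruct (Req_EM_T (bprob x) 1) as [E|E].
    + rewrite E, IH by lra. ring.
    + rewrite !IH by lra. ring.
Qed.

Lemma total_size_repeat x n : total_size (repeat x n) = INR n * bsize x.
Proof. induction n as [|n IH]; cbn [repeat total_size]; [cbn; ring|]. rewrite IH, S_INR; ring. Qed.

(* Union bound: n rare unit items are not all absent with probability <= n q. *)
Lemma tail_prob_rare_some q n :
  0 <= q <= 1 -> tail_prob (repeat (mkItem q 1) n) 0 <= INR n * q.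
Proof.
  intro Hq. assert (Hs : Forall sound (repeat (mkItem q 1) n)) by (apply sound_repeat; cbv; lra).
  induction n as [|n IH].
  - rewrite tail_prob_nil. destruct Rlt_dec; cbn; lra.
  - cbn [repeat] in *. inversion Hs as [|? ? _ Hs']. rewrite tail_prob_cons; cbn [bprob bsize].
    rewrite tail_prob_negative by (auto; lra).
    pose proof (IH Hs'). pose proof (tail_prob_nonneg _ 0 Hs'). rewrite S_INR. nra.
Qed.

(* n rare unit items exceed 1 only if two are present: probability <= (n q)^2. *)
Lemma tail_prob_rare_two q n :
  0 <= q <= 1 -> tail_prob (repeat (mkItem q 1) n) 1 <= (INR n * q) ^ 2.
Proof.
  intro Hq. assert (Hs : Forall sound (repeat (mkItem q 1) n)) by (apply sound_repeat; cbv; lra).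
  induction n as [|n IH].
  - rewrite tail_prob_nil. destruct Rlt_dec; cbn; lra.
  - cbn [repeat] in *. inversion Hs as [|? ? _ Hs']. rewrite tail_prob_cons; cbn [bprob bsize].
    replace (1 - 1) with 0 by ring.
    pose proof (IH Hs'). pose proof (tail_prob_rare_some q n Hq).
    pose proof (tail_prob_nonneg _ 1 Hs'). pose proof (pos_INR n). rewrite S_INR. nra.
Qed.

Lemma combine_app {A B} (l1 l2 : list A) (m1 m2 : list B) :
  length l1 = length m1 -> combine (l1 ++ l2) (m1 ++ m2) = combine l1 m1 ++ combine l2 m2.
Proof.
  revert m1; induction l1 as [|a l1 IH]; intros [|b m1] H; cbn in *; try discriminate; auto.
  rewrite IH; auto.
Qed.

Lemma bin_of_snoc l x f j :
  bin_of (l ++ [x]) f j = bin_of l f j ++ (if Nat.eqb (f (length l)) j then [x] else []).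
Proof.
  unfold bin_of. rewrite length_app, seq_app, combine_app by (rewrite length_seq; auto).
  rewrite filter_app, map_app. cbn. destruct (Nat.eqb (f (length l)) j); reflexivity.
Qed.

Lemma bin_of_incl l f j x : In x (bin_of l f j) -> In x l.
Proof.
  unfold bin_of. intro H. apply in_map_iff in H as [[y i] [<- H]].
  apply filter_In in H as [H _]. eapply in_combine_l; eauto.
Qed.

Lemma bin_of_ext l f g j :
  (forall i, (i < length l)%nat -> f i = g i) -> bin_of l f j = bin_of l g j.
Proof.
  intro Hfg. unfold bin_of. f_equal. apply filter_ext_in. intros [x i] H.
  apply in_combine_r, in_seq in H. cbn. rewrite Hfg by lia. reflexivity.
Qed.

Lemma certain_mass_bins l f m :
  (forall i, (i < length l)%nat -> (f i < m)%nat) ->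
  sumR (map (fun j => certain_mass (bin_of l f j)) (seq 0 m)) = certain_mass l.
Proof.
  induction l as [|x l IH] using rev_ind; intro Hf.
  - apply sumR_zero. reflexivity.
  - rewrite length_app in Hf; cbn in Hf.
    rewrite (map_ext _ (fun j => certain_mass (bin_of l f j) +
                (if Nat.eqb (f (length l)) j then certain_mass [x] else 0))).
    + rewrite sumR_plus, IH, sumR_indicator, certain_mass_app by (intros; apply Hf; lia).
      reflexivity.
    + intro j. rewrite bin_of_snoc, certain_mass_app.
      destruct (Nat.eqb (f (length l)) j); cbn; ring.
Qed.

Lemma viable_certain_mass alpha l :
  alpha < 1 -> Forall sound l -> viable alpha l -> certain_mass l <= 1.
Proof.
  intros Ha Hl Hv. destruct (Rle_lt_dec (certain_mass l) 1) as [Hle|Hgt]; [exact Hle|].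
  unfold viable in Hv. rewrite overflow_tail_prob, tail_prob_below_certain in Hv by assumption; lra.
Qed.

Lemma certain_mass_le_bins alpha items m f :
  alpha < 1 -> Forall sound items -> viable_packing alpha items m f ->
  certain_mass items <= INR m.
Proof.
  intros Ha Hitems [Hf Hv].
  rewrite <- (certain_mass_bins items f m Hf), <- sumR_const_one.
  apply sumR_le. intros j Hj. apply in_seq in Hj.
  apply (viable_certain_mass alpha); [exact Ha| |apply Hv; lia].
  rewrite Forall_forall in *. intros x Hx. exact (Hitems x (bin_of_incl _ _ _ _ Hx)).
Qed.

(* A list of (item, bin) pairs describes a packing of its items. *)
Definition label_fun (L : list (item * nat)) (i : nat) : nat := nth i (map snd L) 0%nat.

Lemma bin_of_labels L j :
  bin_of (map fst L) (label_fun L) j = map fst (filter (fun xl => Nat.eqb (snd xl) j) L).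
Proof.
  induction L as [|[x b] L IH] using rev_ind; [reflexivity|].
  rewrite map_app; cbn [map fst]. rewrite bin_of_snoc, filter_app, map_app, length_map.
  rewrite (bin_of_ext _ _ (label_fun L)), IH.
  - unfold label_fun. rewrite map_app, app_nth2, length_map, Nat.sub_diag by (rewrite length_map; lia).
    cbn. destruct (Nat.eqb b j); reflexivity.
  - intros i Hi. rewrite length_map in Hi. unfold label_fun.
    rewrite map_app, app_nth1 by (rewrite length_map; exact Hi). reflexivity.
Qed.

Lemma label_fun_bound L m :
  Forall (fun xl => (snd xl < m)%nat) L ->
  forall i, (i < length (map fst L))%nat -> (label_fun L i < m)%nat.
Proof.
  intros HL i Hi. rewrite length_map in Hi. unfold label_fun.
  assert (Hin : In (nth i (map snd L) 0%nat) (map snd L)) by (apply nth_In; rewrite length_map; exact Hi).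
  apply in_map_iff in Hin as [xl [<- Hxl]]. rewrite Forall_forall in HL. exact (HL xl Hxl).
Qed.

Lemma opt_exists alpha items m f :
  viable_packing alpha items m f ->
  exists opt, is_OPT alpha items opt /\ (opt <= m)%nat.
Proof.
  intro Hp.
  destruct (dec_inh_nat_subset_has_unique_least_element
              (fun n => exists g, viable_packing alpha items n g)
              (fun n => classic _) (ex_intro _ m (ex_intro _ f Hp)))
    as [opt [[Hopt Hmin] _]].
  exists opt. split; [split; [exact Hopt|]|].
  - intros n g Hg. apply Hmin. eauto.
  - apply Hmin. eauto.
Qed.

Lemma add_to_length k bins x : length (add_to k bins x) = length bins.
Proof. revert k; induction bins as [|b bins IH]; intros [|k]; cbn; auto. Qed.

Lemma run_aux_length_mono A past bins items :
  (length bins <= length (run_aux A past bins items))%nat.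
Proof.
  revert past bins; induction items as [|x r IH]; intros past bins; cbn [run_aux]; [lia|].
  eapply Nat.le_trans; [|apply IH].
  destruct (Nat.ltb (A past bins x) (length bins));
    [rewrite add_to_length | rewrite length_app; cbn]; lia.
Qed.

Lemma nth_repeat_snoc {T} (a b : T) i k d :
  (k < i)%nat -> nth k (repeat a i ++ [b]) d = a.
Proof. intro Hk. rewrite app_nth1, nth_repeat_lt by (rewrite ?repeat_length; exact Hk). reflexivity. Qed.

Lemma add_to_repeat_snoc (a b : list item) x i :
  add_to i (repeat a i ++ [b]) x = repeat a i ++ [b ++ [x]].
Proof. induction i as [|i IH]; cbn; [reflexivity|]. rewrite IH; reflexivity. Qed.

Section AnyFitPairs.
Variables (alpha : R) (A : algorithm) (x y : item).
Hypothesis HA : any_fit alpha A.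
Hypothesis Hxy : viable alpha [x; y].
Hypothesis Hx : viable alpha [x].
Hypothesis Hxyx : ~ viable alpha [x; y; x].
Hypothesis Hxyy : ~ viable alpha [x; y; y].

(* x finds no room in the full pair bins, so it opens a new bin, which is then
   the only bin that accepts y. *)
Lemma any_fit_pair_step past i rest :
  run_aux A past (repeat [x; y] i) (x :: y :: rest) =
  run_aux A (past ++ [x] ++ [y]) (repeat [x; y] (S i)) rest.
Proof.
  assert (Hbins : Forall (viable alpha) (repeat [x; y] i)).
  { apply Forall_forall. intros b Hb. apply repeat_spec in Hb. subst b. exact Hxy. }
  cbn [run_aux]. rewrite repeat_length.
  destruct (HA past (repeat [x; y] i) x Hbins) as [Hin _].
  destruct (Nat.ltb_spec (A past (repeat [x; y] i) x) i) as [Hlt|_].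
  { exfalso. rewrite repeat_length in Hin. specialize (Hin Hlt).
    rewrite nth_repeat_lt in Hin by exact Hlt. exact (Hxyx Hin). }
  set (bins := repeat [x; y] i ++ [[x]]).
  assert (Hbins' : Forall (viable alpha) bins) by (apply Forall_app; auto).
  assert (Hlen : length bins = S i) by (unfold bins; rewrite length_app, repeat_length; cbn; lia).
  destruct (HA (past ++ [x]) bins y Hbins') as [Hin' Hnew].
  rewrite Hlen. destruct (Nat.ltb_spec (A (past ++ [x]) bins y) (S i)) as [Hlt|Hge].
  - rewrite Hlen in Hin'. specialize (Hin' Hlt).
    destruct (Nat.lt_ge_cases (A (past ++ [x]) bins y) i) as [Hlt'|Hge'].
    + exfalso. unfold bins in Hin'. rewrite nth_repeat_snoc in Hin' by exact Hlt'.
      exact (Hxyy Hin').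
    + replace (A (past ++ [x]) bins y) with i by lia. unfold bins.
      rewrite add_to_repeat_snoc, <- app_assoc. cbn [app].
      rewrite <- repeat_cons. reflexivity.
  - exfalso. rewrite Hlen in Hnew. apply (Hnew Hge [x]); [|exact Hxy].
    unfold bins. apply in_or_app. right. left. reflexivity.
Qed.

Lemma any_fit_pairs p i past rest :
  (i + p <= length (run_aux A past (repeat [x; y] i) (concat (repeat [x; y] p) ++ rest)))%nat.
Proof.
  revert i past. induction p as [|p IH]; intros i past.
  - pose proof (run_aux_length_mono A past (repeat [x; y] i) rest) as H.
    rewrite repeat_length in H. cbn. lia.
  - cbn [repeat concat app]. rewrite any_fit_pair_step. specialize (IH (S i) (past ++ [x] ++ [y])). lia.
Qed.

End AnyFitPairs.

Definition bin_with (L : list (item * nat)) (j : nat) : list item :=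
  map fst (filter (fun xl => Nat.eqb (snd xl) j) L).

Lemma bin_with_app L1 L2 j : bin_with (L1 ++ L2) j = bin_with L1 j ++ bin_with L2 j.
Proof. unfold bin_with. rewrite filter_app, map_app. reflexivity. Qed.

Definition pair_block (a b : item) (k n : nat) : list (item * nat) :=
  concat (repeat [(a, 2 * n); (b, 2 * n + 1)]%nat k).

Fixpoint pair_part (a b : item) (k n : nat) : list (item * nat) :=
  match n with O => [] | S n => pair_part a b k n ++ pair_block a b k n end.

Fixpoint single_part (u : item) (c n : nat) : list (item * nat) :=
  match n with O => [] | S n => single_part u c n ++ [(u, c + n)%nat] end.

Definition layout (a b u : item) (k N : nat) : list (item * nat) :=
  pair_part a b k N ++ single_part u (2 * N) N.

Lemma bin_with_pair_block a b k n j :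
  bin_with (pair_block a b k n) j =
  if Nat.eqb (2 * n) j then repeat a k else if Nat.eqb (2 * n + 1) j then repeat b k else [].
Proof.
  unfold pair_block. induction k as [|k IH].
  - destruct (Nat.eqb (2 * n) j), (Nat.eqb (2 * n + 1) j); reflexivity.
  - cbn [repeat concat]. rewrite bin_with_app, IH. unfold bin_with. cbn [filter snd fst map].
    destruct (Nat.eqb_spec (2 * n) j), (Nat.eqb_spec (2 * n + 1) j); try lia; reflexivity.
Qed.

Lemma bin_with_pair_part a b k n j :
  ((2 * n <= j)%nat -> bin_with (pair_part a b k n) j = []) /\
  In (bin_with (pair_part a b k n) j) [[]; repeat a k; repeat b k].
Proof.
  induction n as [|n [IHlast IHin]]; cbn [pair_part].
  - split; [reflexivity | left; reflexivity].
  - rewrite bin_with_app, bin_with_pair_block.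
    destruct (Nat.eqb_spec (2 * n) j), (Nat.eqb_spec (2 * n + 1) j); try lia.
    + rewrite IHlast by lia. split; [lia | cbn; auto].
    + rewrite IHlast by lia. split; [lia | cbn; auto].
    + rewrite app_nil_r. split; [intro; apply IHlast; lia | exact IHin].
Qed.

Lemma bin_with_single_part u c n j :
  bin_with (single_part u c n) j = if (Nat.leb c j && Nat.ltb j (c + n))%bool then [u] else [].
Proof.
  induction n as [|n IH]; cbn [single_part].
  - destruct (Nat.leb_spec c j), (Nat.ltb_spec j (c + 0)); try lia; reflexivity.
  - rewrite bin_with_app, IH. unfold bin_with. cbn [filter snd fst map].
    destruct (Nat.leb_spec c j), (Nat.ltb_spec j (c + n)), (Nat.ltb_spec j (c + S n)),
      (Nat.eqb_spec (c + n) j); try lia; reflexivity.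
Qed.

Lemma bin_with_layout a b u k N j :
  In (bin_with (layout a b u k N) j) [[]; repeat a k; repeat b k; [u]].
Proof.
  unfold layout. rewrite bin_with_app, bin_with_single_part.
  destruct (bin_with_pair_part a b k N j) as [Hlast Hin].
  destruct (Nat.leb_spec (2 * N) j) as [Hj|Hj]; cbn [andb].
  - rewrite Hlast by exact Hj. destruct (Nat.ltb j _); cbn; auto.
  - rewrite app_nil_r. cbn in *. tauto.
Qed.

Lemma pair_part_labels a b k n :
  Forall (fun xl => (snd xl < 2 * n)%nat) (pair_part a b k n).
Proof.
  induction n as [|n IH]; cbn [pair_part]; [constructor|].
  apply Forall_app. split.
  - eapply Forall_impl; [|exact IH]. intros xl Hxl. cbn beta in *. lia.
  - apply Forall_forall. intros xl Hxl. unfold pair_block in Hxl.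
    apply in_concat in Hxl as [P [HP Hxl]]. apply repeat_spec in HP. subst P.
    destruct Hxl as [<-|[<-|[]]]; cbn; lia.
Qed.

Lemma single_part_labels u c n :
  Forall (fun xl => (snd xl < c + n)%nat) (single_part u c n).
Proof.
  induction n as [|n IH]; cbn [single_part]; [constructor|].
  apply Forall_app. split.
  - eapply Forall_impl; [|exact IH]. intros xl Hxl. cbn beta in *. lia.
  - repeat constructor. cbn. lia.
Qed.

Lemma layout_labels a b u k N :
  Forall (fun xl => (snd xl < 3 * N)%nat) (layout a b u k N).
Proof.
  unfold layout. apply Forall_app. split.
  - eapply Forall_impl; [|apply pair_part_labels]. intros xl Hxl. cbn beta in *. lia.
  - eapply Forall_impl; [|apply single_part_labels]. intros xl Hxl. cbn beta in *. lia.
Qed.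

Lemma pair_part_items a b k n :
  map fst (pair_part a b k n) = concat (repeat [a; b] (n * k)).
Proof.
  induction n as [|n IH]; cbn [pair_part]; [reflexivity|].
  rewrite map_app, IH. unfold pair_block. rewrite concat_map, map_repeat. cbn [map fst].
  rewrite <- concat_app, <- repeat_app. f_equal. f_equal. lia.
Qed.

Lemma single_part_items u c n : map fst (single_part u c n) = repeat u n.
Proof.
  induction n as [|n IH]; cbn [single_part]; [reflexivity|].
  rewrite map_app, IH. cbn [map fst]. rewrite <- repeat_cons. reflexivity.
Qed.

Lemma layout_items a b u k N :
  map fst (layout a b u k N) = concat (repeat [a; b] (N * k)) ++ repeat u N.
Proof. unfold layout. rewrite map_app, pair_part_items, single_part_items. reflexivity. Qed.

Ltac expand_viable :=
  unfold viable; rewrite overflow_tail_prob;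
  repeat (rewrite tail_prob_cons; cbn [bprob bsize]); rewrite !tail_prob_nil;
  repeat destruct Rlt_dec.

(* The pair gadget: small ~ Ber(1/2, s) and rare ~ Ber(2 alpha, 1) with s in (0, 1].
   [small; rare] overflows with probability alpha, [small; rare; small] with
   3 alpha / 2 and [small; rare; rare] with 2 alpha. *)
Section Gadget.
Variables (alpha s : R).
Hypothesis Halpha : 0 < alpha <= 1 / 16.
Hypothesis Hs : 0 < s <= 1.
Let small := mkItem (1 / 2) s.
Let rare := mkItem (2 * alpha) 1.

Lemma gadget_pair_viable : viable alpha [small; rare].
Proof. unfold small, rare. expand_viable; nra. Qed.

Lemma gadget_small_viable : viable alpha [small].
Proof. unfold small. expand_viable; nra. Qed.

Lemma gadget_rejects_small : ~ viable alpha [small; rare; small].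
Proof. unfold small, rare. expand_viable; nra. Qed.

Lemma gadget_rejects_rare : ~ viable alpha [small; rare; rare].
Proof. unfold small, rare. expand_viable; nra. Qed.

End Gadget.

Lemma nat_between x : 1 <= x -> exists k, (0 < k)%nat /\ x <= INR k <= 2 * x.
Proof.
  intro Hx. destruct (archimed x) as [Hup1 Hup2].
  assert (Hz : (0 <= up x)%Z) by (apply le_IZR; lra).
  exists (Z.to_nat (up x)).
  rewrite INR_IZR_INZ, Z2Nat.id by exact Hz.
  split; [|lra].
  apply Nat.neq_0_lt_0. intro H0. apply (f_equal Z.of_nat) in H0.
  rewrite Z2Nat.id in H0 by exact Hz. rewrite H0 in Hup1. cbn in Hup1. lra.
Qed.

Definition hard_layout (alpha : R) (k N : nat) : list (item * nat) :=
  layout (mkItem (1 / 2) (/ INR k)) (mkItem (2 * alpha) 1) (mkItem 1 1) k N.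

Lemma certain_mass_pairs x y p :
  bprob x <> 1 -> bprob y <> 1 -> certain_mass (concat (repeat [x; y] p)) = 0.
Proof.
  intros Hx Hy. induction p as [|p IH]; [reflexivity|].
  cbn [repeat concat app certain_mass]. rewrite IH.
  destruct (Req_EM_T (bprob x) 1), (Req_EM_T (bprob y) 1); try contradiction. ring.
Qed.

Lemma certain_mass_units n : certain_mass (repeat (mkItem 1 1) n) = INR n.
Proof.
  induction n as [|n IH]; [reflexivity|].
  cbn [repeat certain_mass bprob bsize]. rewrite IH, S_INR.
  destruct (Req_EM_T 1 1); [ring | contradiction].
Qed.

Section HardInstance.
Variables (alpha : R) (k N : nat).
Hypothesis Halpha : 0 < alpha <= 1 / 16.
Hypothesis Hk : (0 < k)%nat.
Hypothesis Hk_small : (INR k * (2 * alpha)) ^ 2 <= alpha.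

Let L := hard_layout alpha k N.

Lemma INR_k_ge1 : 1 <= INR k.
Proof. apply (le_INR 1). exact Hk. Qed.

Lemma inv_k_bounds : 0 < / INR k <= 1.
Proof.
  pose proof INR_k_ge1. split; [apply Rinv_0_lt_compat; lra|].
  rewrite <- Rinv_1. apply Rinv_le_contravar; lra.
Qed.

Lemma hard_items_valid : Forall valid_item (map fst L).
Proof.
  pose proof inv_k_bounds.
  unfold L, hard_layout. rewrite layout_items. apply Forall_app. split.
  - apply Forall_forall. intros x Hx. apply in_concat in Hx as [P [HP Hx]].
    apply repeat_spec in HP. subst P. destruct Hx as [<-|[<-|[]]]; unfold valid_item; cbn; lra.
  - apply Forall_forall. intros x Hx. apply repeat_spec in Hx. subst x. unfold valid_item; cbn; lra.
Qed.

(* The labelled packing into 3N bins: k copies of the small item, k copies of the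
   rare item, or one unit item per bin. *)
Lemma hard_packing : viable_packing alpha (map fst L) (3 * N) (label_fun L).
Proof.
  pose proof INR_k_ge1. pose proof inv_k_bounds. split.
  - apply label_fun_bound. apply layout_labels.
  - intros j _. rewrite bin_of_labels. fold (bin_with L j). unfold L, hard_layout.
    destruct (bin_with_layout (mkItem (1 / 2) (/ INR k)) (mkItem (2 * alpha) 1) (mkItem 1 1) k N j)
      as [<- | [<- | [<- | [<- | []]]]]; unfold viable; rewrite overflow_tail_prob.
    + rewrite tail_prob_nil. destruct Rlt_dec; lra.
    + rewrite tail_prob_beyond_total.
      * lra.
      * apply sound_repeat. unfold sound; cbn. lra.
      * rewrite total_size_repeat. cbn. rewrite Rinv_r; lra.
    + pose proof (tail_prob_rare_two (2 * alpha) k ltac:(lra)). lra.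
    + rewrite tail_prob_beyond_total; [lra | apply sound_repeat with (n := 1%nat); cbv; lra | cbn; lra].
Qed.

Lemma hard_certain_mass : certain_mass (map fst L) = INR N.
Proof.
  unfold L, hard_layout. rewrite layout_items, certain_mass_app, certain_mass_pairs, certain_mass_units;
    cbn; lra.
Qed.

Lemma hard_any_fit A : any_fit alpha A -> (N * k <= bins_used A (map fst L))%nat.
Proof.
  intro HA. pose proof inv_k_bounds as Hs.
  unfold bins_used, L, hard_layout. rewrite layout_items.
  exact (any_fit_pairs alpha A _ _ HA
           (gadget_pair_viable alpha _ Halpha Hs) (gadget_small_viable alpha _ Halpha Hs)
           (gadget_rejects_small alpha _ Halpha Hs) (gadget_rejects_rare alpha _ Halpha Hs)
           (N * k) 0 [] _).
Qed.

(* The N certain unit items force N bins. *)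
Lemma hard_opt_lower opt : is_OPT alpha (map fst L) opt -> (N <= opt)%nat.
Proof.
  intros [[f Hf] _]. apply INR_le. rewrite <- hard_certain_mass.
  apply (certain_mass_le_bins alpha _ _ f); [lra | | exact Hf].
  exact (Forall_impl _ valid_sound hard_items_valid).
Qed.

End HardInstance.

(* The scale of the instance: k ~ 1 / (4 sqrt alpha), small enough for
   (2 alpha k)^2 <= alpha and large enough for 1 / sqrt alpha <= 4 k. *)
Lemma choose_scale alpha :
  0 < alpha <= 1 / 16 ->
  exists k, (0 < k)%nat /\ (INR k * (2 * alpha)) ^ 2 <= alpha /\ / sqrt alpha <= 4 * INR k.
Proof.
  intro Halpha. set (r := sqrt alpha).
  assert (Hr0 : 0 < r) by (apply sqrt_lt_R0; lra).
  assert (Hrr : r * r = alpha) by (apply sqrt_sqrt; lra).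
  assert (Hy : / (4 * r) * (4 * r) = 1) by (field; lra).
  set (y := / (4 * r)) in *.
  destruct (nat_between y) as [k [Hk [Hk_lo Hk_hi]]]; [nra|].
  exists k. split; [exact Hk|]. split.
  - assert (Hkr : 0 <= INR k * r <= 1 / 2) by (pose proof (pos_INR k); split; nra).
    replace ((INR k * (2 * alpha)) ^ 2) with (4 * (INR k * r) ^ 2 * alpha)
      by (rewrite <- Hrr; ring).
    assert ((INR k * r) ^ 2 <= 1 / 4) by nra. nra.
  - replace (/ r) with (4 * y) by (unfold y; field; lra). lra.
Qed.

Theorem theorem2 :
  exists (c alpha0 : R), 0 < c /\ 0 < alpha0 <= 1 / 2 /\
    forall alpha : R, 0 < alpha <= alpha0 ->
    forall A : algorithm, any_fit alpha A ->
    forall N : nat, (0 < N)%nat ->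
    exists items : list item,
      Forall valid_item items /\
      exists opt : nat,
        is_OPT alpha items opt /\ (N <= opt)%nat /\
        c * / sqrt alpha * INR opt <= INR (bins_used A items).
Proof.
  exists (1 / 12), (1 / 16). split; [lra|]. split; [lra|].
  intros alpha Halpha A HA N _.
  destruct (choose_scale alpha Halpha) as [k [Hk [Hk_small Hk_ratio]]].
  set (items := map fst (hard_layout alpha k N)).
  destruct (opt_exists alpha items _ _ (hard_packing alpha k N Halpha Hk Hk_small))
    as [opt [Hopt Hopt_le]].
  exists items. split; [exact (hard_items_valid alpha k N Halpha Hk)|].
  exists opt. split; [exact Hopt|].
  split; [exact (hard_opt_lower alpha k N Halpha Hk opt Hopt)|].
  (* c / sqrt alpha * OPT <= (4 k / 12) * 3 N = N k <= bins used by Any-Fit *)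
  pose proof (le_INR _ _ (hard_any_fit alpha k N Halpha Hk A HA)) as Hon.
  apply le_INR in Hopt_le. rewrite mult_INR in Hon, Hopt_le. cbn [INR] in Hopt_le.
  assert (Hinv : 0 <= / sqrt alpha) by (left; apply Rinv_0_lt_compat, sqrt_lt_R0; lra).
  pose proof (Rmult_le_compat _ _ _ _ Hinv (pos_INR opt) Hk_ratio Hopt_le).
  pose proof (pos_INR k). pose proof (pos_INR N). fold items in Hon. nra.
Qed.
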